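(* Let $L\ge1$ and $q\in\{2,\dots,L\}$ be integers, $\delta\in(0,1)$, $k=\lceil L/\delta\rceil$, and $s,d\ge1$. Let $I$ be an $(s,d)$-decent instance of Min Weight Generalized Domination with Gaifman graph $G$ and minimum solution cost $\mathsf{OPT}$. Let $V_0,\dots,V_{k-1}\subseteq V(G)$ be such that $N_G[V_0],\dots,N_G[V_{k-1}]$ are pairwise disjoint, let $I_i=\mathsf{Clear}(I;V_i)$ with minimum solution cost $\mathsf{OPT}_i$, and let reals $p_i$ satisfy $(1-\delta\frac{q-1}{L})\mathsf{OPT}_i\le p_i\le\mathsf{OPT}_i$ for every $i$. Then $p=\max(p_0,\dots,p_{k-1})$ satisfies $(1-\delta\frac{q}{L})\mathsf{OPT}\le p\le\mathsf{OPT}$.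
   Context: An instance of Min Weight Generalized Domination consists of a loopless multigraph $G$ and for every vertex $u$: a finite domain $D_u$, $\mathsf{cost}_u\colon D_u\to\mathbb{R}_{\ge0}\cup\{+\infty\}$, and $\mathsf{supply}_u,\mathsf{demand}_u\colon D_u\to 2^{\delta(u)}$ ($\delta(u)$ = edges incident to $u$), with some $s_u\in D_u$ having $\mathsf{supply}_u(s_u)=\delta(u)$ and finite cost. A solution is $\phi$ with $\phi(u)\in D_u$ such that for every edge $e$ with endpoints $u,v$, $e\in\mathsf{demand}_u(\phi(u))\Rightarrow e\in\mathsf{supply}_v(\phi(v))$ and $e\in\mathsf{demand}_v(\phi(v))\Rightarrow e\in\mathsf{supply}_u(\phi(u))$; cost $\sum_u\mathsf{cost}_u(\phi(u))$. A vertex is $(s,d)$-meager if $|\delta(u)|\le s$ and $|D_u|\le d$; state-monotonous if for all ordered $x_1,x_2\in D_u$ there is $x\in D_u$ with $\mathsf{cost}_u(x)\le\mathsf{cost}_u(x_1)+\mathsf{cost}_u(x_2)$, $\mathsf{supply}_u(x)=\mathsf{supply}_u(x_1)\cup\mathsf{supply}_u(x_2)$, $\mathsf{demand}_u(x)\subseteq\mathsf{demand}_u(x_1)$; $(s,d)$-decent means all vertices are $(s,d)$-meager and state-monotonous. $N_G[A]$ is the closed neighborhood of $A$. $\mathsf{Clear}(I;A)$ is obtained by deleting all edges with both endpoints in $A$ (also from supply and demand sets) and then setting $\mathsf{demand}_u(x)=\emptyset$ for all $u\in A$, $x\in D_u$. *)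

From HB Require Import structures.
From mathcomp Require Import all_boot all_order all_algebra.
From mathcomp Require Import constructive_ereal reals.
Set Implicit Arguments. Unset Strict Implicit. Unset Printing Implicit Defensive.
Import Order.TTheory GRing.Theory Num.Theory.
Local Open Scope ring_scope.
Local Open Scope ereal_scope.

(* V : vertices, E : edge identifiers (multigraph: parallel edges allowed),
   St : a common finite carrier of states; the domain of u is [dom u].
   Only the edges in [edges] are present in the multigraph; [end1 e], [end2 e]
   are the two endpoints of e. *)
Record Instance (R : realType) (V E St : finType) := MkInstance {
  edges  : {set E};
  end1   : E -> V;
  end2   : E -> V;
  dom    : V -> {set St};
  cost   : V -> St -> \bar R;
  supply : V -> St -> {set E};
  demand : V -> St -> {set E}
}.

Section Defs.
Context {R : realType} {V E St : finType}.
Implicit Types (I : Instance R V E St) (A : {set V}).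

Definition inc I (u : V) : {set E} :=
  [set e in edges I | (end1 I e == u) || (end2 I e == u)].

Definition wf_instance I : Prop :=
  [/\ forall e, e \in edges I -> end1 I e != end2 I e,
      forall u x, x \in dom I u -> 0 <= cost I u x,
      forall u x, x \in dom I u -> supply I u x \subset inc I u,
      forall u x, x \in dom I u -> demand I u x \subset inc I u &
      forall u, exists2 s, s \in dom I u &
         supply I u s = inc I u /\ cost I u s < +oo].

Definition is_solution I (phi : {ffun V -> St}) : bool :=
  [forall u, phi u \in dom I u] &&
  [forall e in edges I,
     ((e \in demand I (end1 I e) (phi (end1 I e))) ==>
        (e \in supply I (end2 I e) (phi (end2 I e)))) &&
     ((e \in demand I (end2 I e) (phi (end2 I e))) ==>
        (e \in supply I (end1 I e) (phi (end1 I e))))].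

Definition sol_cost I (phi : {ffun V -> St}) : \bar R :=
  \sum_(u : V) cost I u (phi u).

Definition OPT I : \bar R :=
  \big[mine/+oo]_(phi : {ffun V -> St} | is_solution I phi) sol_cost I phi.

Definition meager I (s d : nat) (u : V) : Prop :=
  (#|inc I u| <= s)%N /\ (#|dom I u| <= d)%N.

Definition state_monotonous I (u : V) : Prop :=
  forall x1 x2, x1 \in dom I u -> x2 \in dom I u ->
    exists2 x, x \in dom I u &
      [/\ cost I u x <= cost I u x1 + cost I u x2,
          supply I u x = supply I u x1 :|: supply I u x2 &
          demand I u x \subset demand I u x1].

Definition decent I (s d : nat) : Prop :=
  forall u, meager I s d u /\ state_monotonous I u.

Definition gadj I (u v : V) : bool :=
  [exists e in edges I, ((end1 I e == u) && (end2 I e == v)) ||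
                        ((end1 I e == v) && (end2 I e == u))].

Definition closed_nbh I A : {set V} :=
  A :|: [set v | [exists a in A, gadj I a v]].

Definition Clear I A : Instance R V E St :=
  let E' := [set e in edges I | ~~ ((end1 I e \in A) && (end2 I e \in A))] in
  MkInstance E' (end1 I) (end2 I) (dom I) (cost I)
    (fun u x => supply I u x :&: E')
    (fun u x => if u \in A then set0 else demand I u x :&: E').

End Defs.

(** Take an optimal solution [phi] of [I] and let [c_i] be its cost on
    [N_G[V_i]].  These neighbourhoods are disjoint and costs are nonnegative,
    so some [c_i] is at most [OPT / k <= delta OPT / L].  Any solution [psi]
    of [Clear(I; V_i)] can be repaired into a solution of [I] by merging, via
    state monotonicity, the states of [psi] and [phi] on [N_G[V_i]] (taking
    the demands of [phi] on [V_i] and those of [psi] elsewhere); hence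
    [OPT <= OPT_i + c_i], and the error of [p_i] grows by at most
    [delta OPT / L].  The upper bound holds because every solution of [I]
    solves each [Clear(I; V_i)]. *)
From HB Require Import structures.
From mathcomp Require Import all_boot all_order all_algebra.
From mathcomp Require Import constructive_ereal reals lra.
Set Implicit Arguments. Unset Strict Implicit. Unset Printing Implicit Defensive.
Import Order.TTheory GRing.Theory Num.Theory.
Local Open Scope ring_scope.

Lemma ler_approx_slack (R : realFieldType) (a b o r c pv : R) :
  0 <= a <= 1 -> 0 <= c -> c <= b * o -> o <= r + c ->
  (1 - a) * r <= pv -> (1 - (a + b)) * o <= pv.
Proof.
move=> /andP[a0 a1] c0 cbo orc arp.
have : (1 - a) * (o - c) <= (1 - a) * r by rewrite ler_wpM2l ?subr_ge0 //; lra.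
have : 0 <= a * c by rewrite mulr_ge0.
nra.
Qed.

Lemma ler_approx_ratio_succ (R : realFieldType) (delta l kr m o r c pv : R) :
  0 < delta < 1 -> 0 <= m -> m + 1 <= l -> l / delta <= kr ->
  0 <= c -> kr * c <= o -> o <= r + c ->
  (1 - delta * m / l) * r <= pv -> (1 - delta * (m + 1) / l) * o <= pv.
Proof.
move=> /andP[d0 d1] m0 ml lk c0 kco orc hp.
have l0 : 0 < l by lra.
have -> : delta * (m + 1) / l = delta * m / l + delta / l by rewrite mulrDr mulr1 mulrDl.
apply: ler_approx_slack (c0) _ orc hp.
- apply/andP; split; first by rewrite divr_ge0 // ?mulr_ge0 // ltW.
  by rewrite ler_pdivrMr // mul1r; nra.
- rewrite -invf_div ler_pdivlMl ?divr_gt0 //; apply: le_trans kco.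
  by rewrite ler_wpM2r.
Qed.

Lemma sum_disjoint_sets_le (R : numDomainType) (J T : finType)
    (F : J -> {set T}) (w : T -> R) :
  (forall u, 0 <= w u) -> (forall i j, i != j -> [disjoint F i & F j]) ->
  \sum_i \sum_(u in F i) w u <= \sum_u w u.
Proof.
move=> w0 disjF; rewrite -(partition_disjoint_bigcup _ _ disjF).
rewrite [leRHS](bigID (mem (\bigcup_i F i))) /= lerDl.
exact: sumr_ge0.
Qed.

Lemma exists_le_mean (R : realDomainType) (J : finType) (c : J -> R) (j0 : J) :
  exists i, #|J|%:R * c i <= \sum_(j : J) c j.
Proof.
exists [arg min_(i < j0) c i]%O; case: arg_minP => // i _ imin.
rewrite mulr_natl -sumr_const; change (\sum_(j : J) c i <= \sum_j c j).
by apply: ler_sum => j _; exact: imin.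
Qed.

Section Domination.
Context {R : realType} {V E St : finType}.
Implicit Types (I : Instance R V E St) (A : {set V}) (phi psi chi : {ffun V -> St}).
Local Open Scope ereal_scope.

Definition joins I (e : E) (x y : V) : bool :=
  ((end1 I e == x) && (end2 I e == y)) || ((end1 I e == y) && (end2 I e == x)).

Lemma is_solutionP I phi :
  reflect ((forall u, phi u \in dom I u) /\
           (forall e x y, e \in edges I -> joins I e x y ->
              e \in demand I x (phi x) -> e \in supply I y (phi y)))
          (is_solution I phi).
Proof.
apply: (iffP andP) => -[/forallP phi_dom He]; split => //.
- move=> e x y eI; have /andP[h1 h2] := forall_inP He e eI.
  by case/orP=> /andP[/eqP<- /eqP<-]; exact/implyP.
- apply/forall_inP => e eI; apply/andP; split; apply/implyP; apply: He => //.
  + by rewrite /joins !eqxx.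
  + by rewrite /joins !eqxx orbT.
Qed.

Lemma subset_closed_nbh I A : A \subset closed_nbh I A.
Proof. exact: subsetUl. Qed.

Lemma joins_closed_nbh I A e x y :
  e \in edges I -> joins I e x y -> x \in A -> y \in closed_nbh I A.
Proof.
move=> eI exy xA; rewrite !inE; apply/orP; right.
by apply/existsP; exists x; rewrite xA; apply/exists_inP; exists e.
Qed.

Lemma is_solution_Clear I A phi : is_solution I phi -> is_solution (Clear I A) phi.
Proof.
move=> /is_solutionP[phi_dom phi_sol]; apply/is_solutionP; split=> // e x y.
rewrite /= inE => /andP[eI eA] exy; case: ifP => _; first by rewrite inE.
by rewrite !inE eI eA !andbT; exact: phi_sol.
Qed.

(* An edge leaving a vertex outside [A] survives in [Clear I A] with the
   same demand and supply. *)
Lemma Clear_demand_supply I A psi e x y :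
  is_solution (Clear I A) psi -> e \in edges I -> joins I e x y -> x \notin A ->
  e \in demand I x (psi x) -> e \in supply I y (psi y).
Proof.
move=> /is_solutionP[_ psi_sol] eI exy xA hd.
have eC : e \in edges (Clear I A).
  rewrite inE eI /=; apply: contra xA.
  by case/orP: exy => /andP[/eqP-> /eqP->] /andP[].
have := psi_sol e x y eC exy; rewrite /= (negbTE xA) inE hd eC => /(_ isT).
by rewrite inE => /andP[].
Qed.

Definition merged_state I A phi psi (u : V) (x : St) : Prop :=
  [/\ x \in dom I u,
      cost I u x <=
        cost I u (psi u) + (if u \in closed_nbh I A then cost I u (phi u) else 0),
      supply I u (psi u) \subset supply I u x,
      u \in closed_nbh I A -> supply I u (phi u) \subset supply I u x &
      demand I u x \subset demand I u (if u \in A then phi u else psi u)].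

Lemma exists_merged_state I A phi psi :
  (forall u, state_monotonous I u) ->
  (forall u, phi u \in dom I u) -> (forall u, psi u \in dom I u) ->
  exists chi, forall u, merged_state I A phi psi u (chi u).
Proof.
move=> mono phi_dom psi_dom.
suff /fin_all_exists[f Hf] : forall u, exists x, merged_state I A phi psi u x.
  by exists [ffun u => f u] => u; rewrite ffunE.
move=> u; rewrite /merged_state.
case: (boolP (u \in closed_nbh I A)) => uN; last first.
  have uA : u \notin A by apply: contra uN; apply/subsetP/subset_closed_nbh.
  by exists (psi u); rewrite adde0 (negbTE uA).
case: (boolP (u \in A)) => _.
- have [x xd [cx sx dx]] := mono u _ _ (phi_dom u) (psi_dom u).
  by exists x; rewrite sx addeC subsetUl subsetUr.
- have [x xd [cx sx dx]] := mono u _ _ (psi_dom u) (phi_dom u).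
  by exists x; rewrite sx subsetUl subsetUr.
Qed.

Lemma OPT_le I phi : is_solution I phi -> OPT I <= sol_cost I phi.
Proof. exact: bigmin_le_cond. Qed.

Lemma OPT_le_Clear_nbh I A phi psi :
  (forall u, state_monotonous I u) ->
  is_solution I phi -> is_solution (Clear I A) psi ->
  OPT I <= sol_cost I psi + \sum_(u in closed_nbh I A) cost I u (phi u).
Proof.
move=> mono phi_sol psi_sol.
have [phi_dom phi_edge] := is_solutionP _ _ phi_sol.
have [psi_dom _] := is_solutionP _ _ psi_sol.
have [chi Hchi] := exists_merged_state A mono phi_dom psi_dom.
have chi_sol : is_solution I chi.
  apply/is_solutionP; split=> [u | e x y eI exy]; first by case: (Hchi u).
  have [_ _ Spsi Sphi _] := Hchi y; have [_ _ _ _ Dx] := Hchi x.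
  move=> /(subsetP Dx); case: ifP => xA hd.
  - exact: subsetP (Sphi (joins_closed_nbh eI exy xA)) _ (phi_edge _ _ _ eI exy hd).
  - exact: subsetP Spsi _ (Clear_demand_supply psi_sol eI exy (negbT xA) hd).
apply: le_trans (OPT_le chi_sol) _.
rewrite /sol_cost (big_mkcond (mem (closed_nbh I A))) -big_split /=.
by apply: lee_sum => u _; case: (Hchi u).
Qed.

Lemma cost_ge0 I phi u :
  wf_instance I -> (forall v, phi v \in dom I v) -> 0 <= cost I u (phi u).
Proof. by case=> _ cost_ge0 _ _ _ /(_ u); exact: cost_ge0. Qed.

Lemma cost_le_sol_cost I phi u :
  wf_instance I -> (forall v, phi v \in dom I v) -> cost I u (phi u) <= sol_cost I phi.
Proof.
move=> wf phi_dom; rewrite /sol_cost (bigD1 u) //=.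
by apply: lee_paddr (lexx _); apply: sume_ge0 => v _; exact: cost_ge0.
Qed.

Lemma exists_finite_solution I :
  wf_instance I -> exists2 phi, is_solution I phi & sol_cost I phi < +oo.
Proof.
case=> _ _ _ _ full.
have /fin_all_exists[f Hf] : forall u, exists x,
    [/\ x \in dom I u, supply I u x = inc I u & cost I u x < +oo].
  by move=> u; have [x xd [sx cx]] := full u; exists x.
exists [ffun u => f u].
- apply/is_solutionP; split=> [u | e x y eI exy _]; rewrite ffunE.
    by case: (Hf u).
  case: (Hf y) => _ -> _; rewrite inE eI.
  by case/orP: exy => /andP[/eqP-> /eqP->]; rewrite eqxx ?orbT.
- rewrite /sol_cost; apply: lte_sum_pinfty => u _; rewrite ffunE.
  by case: (Hf u).
Qed.

Lemma OPT_attained I phi0 :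
  is_solution I phi0 -> exists2 phi, is_solution I phi & OPT I = sol_cost I phi.
Proof.
move=> phi0_sol; rewrite /OPT (bigmin_eq_arg _ _ _ _ phi0_sol); last first.
  by move=> *; exact: leey.
by case: arg_minP => // phi; exists phi.
Qed.

Lemma OPT_Clear_le I A : wf_instance I -> OPT (Clear I A) <= OPT I.
Proof.
case/exists_finite_solution => phi0 /OPT_attained[phi phi_sol ->] _.
exact/OPT_le/is_solution_Clear.
Qed.

Lemma optimal_costs_real I phi :
  wf_instance I -> is_solution I phi -> OPT I = sol_cost I phi ->
  exists2 w : V -> R, forall u, cost I u (phi u) = (w u)%:E & forall u, (0 <= w u)%R.
Proof.
move=> wf /is_solutionP[phi_dom _] opt_phi.
have [phi0 phi0_sol fin0] := exists_finite_solution wf.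
have cost_fin u : cost I u (phi u) \is a fin_num.
  rewrite ge0_fin_numE ?cost_ge0 //; apply: le_lt_trans fin0.
  apply: le_trans (cost_le_sol_cost u wf phi_dom) _.
  by rewrite -opt_phi; exact: OPT_le.
exists (fun u => fine (cost I u (phi u))) => u; first by rewrite fineK.
by rewrite fine_ge0 ?cost_ge0.
Qed.

Lemma exists_cheap_Clear I (J : finType) (Vs : J -> {set V}) (j0 : J) :
  wf_instance I -> (forall u, state_monotonous I u) ->
  (forall i j, i != j -> [disjoint closed_nbh I (Vs i) & closed_nbh I (Vs j)]) ->
  exists i (o r c : R), [/\ OPT I = o%:E, OPT (Clear I (Vs i)) = r%:E,
    (0 <= c)%R, (#|J|%:R * c <= o)%R & (o <= r + c)%R].
Proof.
move=> wf mono disjN.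
have [phi0 phi0_sol _] := exists_finite_solution wf.
have [phi phi_sol opt_phi] := OPT_attained phi0_sol.
have [w cost_w w_ge0] := optimal_costs_real wf phi_sol opt_phi.
have opt_w : OPT I = (\sum_u w u)%:E.
  by rewrite opt_phi /sol_cost -sumEFin; apply: eq_bigr => u _; rewrite cost_w.
pose c i := (\sum_(u in closed_nbh I (Vs i)) w u)%R.
have [i ic] := exists_le_mean c j0.
have [psi psi_sol opt_psi] := OPT_attained (is_solution_Clear (Vs i) phi_sol).
have [psi_dom _] := is_solutionP _ _ psi_sol.
have opt_i_fin : OPT (Clear I (Vs i)) \is a fin_num.
  rewrite ge0_fin_numE; last first.
    by rewrite opt_psi sume_ge0 // => u _; exact: (cost_ge0 u wf psi_dom).
  by apply: le_lt_trans (OPT_Clear_le _ wf) _; rewrite opt_w ltry.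
exists i, (\sum_u w u)%R, (fine (OPT (Clear I (Vs i)))), (c i); split.
- exact: opt_w.
- by rewrite fineK.
- exact: sumr_ge0.
- exact: le_trans ic (sum_disjoint_sets_le w_ge0 disjN).
- rewrite -lee_fin EFinD fineK // opt_psi -opt_w /c -sumEFin.
  under eq_bigr do rewrite -cost_w.
  exact: OPT_le_Clear_nbh.
Qed.
End Domination.

Theorem lemma4p10 (R : realType) (V E St : finType)
  (L q : nat) (delta : R) (k : nat) (s d : nat)
  (I : Instance R V E St) (Vs : 'I_k -> {set V}) (p : 'I_k -> R) :
  (1 <= L)%N -> (2 <= q <= L)%N ->
  0 < delta < 1 ->
  (k : int) = Num.ceil (L%:R / delta) ->
  (1 <= s)%N -> (1 <= d)%N ->
  wf_instance I -> decent I s d ->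
  (forall i j : 'I_k, i != j ->
     [disjoint closed_nbh I (Vs i) & closed_nbh I (Vs j)]) ->
  (forall i : 'I_k,
     ((1 - delta * (q.-1)%:R / L%:R)%:E * OPT (Clear I (Vs i)) <= (p i)%:E)%E /\
     ((p i)%:E <= OPT (Clear I (Vs i)))%E) ->
  ((1 - delta * q%:R / L%:R)%:E * OPT I <= \big[maxe/-oo]_(i < k) (p i)%:E)%E /\
  (\big[maxe/-oo]_(i < k) (p i)%:E <= OPT I)%E.
Proof.
move=> L1 /andP[q2 qL] delta01 k_ceil _ _ wf dec disjN hp.
have mono u : state_monotonous I u by case: (dec u).
have kL : L%:R / delta <= k%:R :> R by rewrite -[k%:R]/((k : int)%:~R) k_ceil ceil_ge.
have k_gt0 : (0 < k)%N.
  rewrite -(ltr0n R); apply: lt_le_trans kL.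
  by rewrite divr_gt0 ?ltr0n //; case/andP: delta01.
split; last first.
  apply: bigmax_le => [|j _]; first exact: leNye.
  exact: le_trans (hp j).2 (OPT_Clear_le _ wf).
have [i [o [r [c [-> opt_i c0 kc orc]]]]] := exists_cheap_Clear (Ordinal k_gt0) wf mono disjN.
rewrite -EFinM; apply: le_trans (le_bigmax _ _ i); rewrite lee_fin.
have := (hp i).1; rewrite opt_i -EFinM lee_fin card_ord in kc *.
have q_gt0 : (0 < q)%N by apply: leq_trans q2.
have -> : q%:R = q.-1%:R + 1 :> R by rewrite natr1 prednK.
move=> hpi; apply: (ler_approx_ratio_succ delta01 _ _ kL c0 kc orc hpi); first exact: ler0n.
by rewrite natr1 prednK // ler_nat.
Qed.
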